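(* Let $$z=e^{1/2}\int_0^1 \frac{e^{-1/(2t^2)}}{t^2}\,dt .$$ For $N\ge1$ let $$R_N=\cfrac{1}{1+\cfrac{1}{1+\cfrac{2}{\ddots\,1+\cfrac{N-1}{1+N}}}}$$ (partial numerators $1,2,\dots,N$). Then $R_N\to z$ as $N\to\infty$, that is, $$z=\cfrac{1}{1+\cfrac{1}{1+\cfrac{2}{1+\cfrac{3}{1+\cfrac{4}{1+\cfrac{5}{1+\cdots}}}}}} .$$
   Context: $z$ is the value the paper assigns to the divergent series $1-1+1\cdot3-1\cdot3\cdot5+1\cdot3\cdot5\cdot7-\cdots$. *)

From Stdlib Require Import Reals.
Open Scope R_scope.

(* Integrand t |-> e^{-1/(2 t^2)} / t^2 (value at t = 0 is irrelevant for
   the Riemann integral). *)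
Definition integrand (t : R) : R := exp (- / (2 * t ^ 2)) / t ^ 2.

(* cf_tail N m = T_{N-m}, where T_N = N and T_k = k / (1 + T_{k+1}). *)
Fixpoint cf_tail (N m : nat) : R :=
  match m with
  | O => INR N
  | S m' => INR (N - S m') / (1 + cf_tail N m')
  end.

(* R_N = 1 / (1 + 1/(1 + 2/( ... (N-1)/(1+N)))) = 1 / (1 + T_1), N >= 1. *)
Definition R_cf (N : nat) : R := 1 / (1 + cf_tail N (N - 1)).

(* Let y n = int_0^1 (1-t)^n e^(-1/(2t^2)) / t^(n+2) dt.  Integrating the derivative of
   (1-t)^n e^(-1/(2t^2)) / t^n over [0,1] gives y 1 + y 0 = e^(-1/2) and
   y (n+2) + y (n+1) = (n+1) y n, that is y n / y (n-1) = n / (1 + y (n+1) / y n).  Hence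
   z = e^(1/2) y 0 equals the continued fraction truncated at depth n with the positive
   tail y n / y (n-1) in place of the rest.  By the Wallis-Euler recurrences, changing a
   nonnegative tail at depth n moves the value by at most (n-1)! / (Q (n+1) Q n) <= 1/n,
   where Q k are the convergent denominators,
   and R N is the same fraction at depth N+1 with tail 0. *)

From Stdlib Require Import Reals Lra Lia.
From Coquelicot Require Import Coquelicot.
Open Scope R_scope.

Section ContinuedFraction.

Variable c : nat -> R.
Hypothesis c_ge0 : forall k, 0 <= c k.

Definition cf_step (k : nat) (x : R) : R := c k / (1 + x).

(* [cf_eval n x = c 0 / (1 + c 1 / (1 + ... c (n-1) / (1 + x)))] *)
Fixpoint cf_eval (n : nat) (x : R) : R :=
  match n with O => x | S m => cf_eval m (cf_step m x) end.

Fixpoint cf_rec (a b : R) (n : nat) : R :=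
  match n with
  | O => a
  | S m => match m with O => b | S k => cf_rec a b m + c k * cf_rec a b k end
  end.

Definition cf_num : nat -> R := cf_rec 1 0.
Definition cf_den : nat -> R := cf_rec 0 1.

Fixpoint cf_coef_prod (n : nat) : R :=
  match n with O => 1 | S m => c m * cf_coef_prod m end.

Lemma cf_rec_SS a b n : cf_rec a b (S (S n)) = cf_rec a b (S n) + c n * cf_rec a b n.
Proof. reflexivity. Qed.

Lemma cf_den_pos n : 0 <= cf_den n /\ 1 <= cf_den (S n).
Proof.
  induction n as [|n [IH0 IH1]]; unfold cf_den in *; [simpl; lra|].
  rewrite cf_rec_SS. pose proof (Rmult_le_pos _ _ (c_ge0 n) IH0). lra.
Qed.

Lemma cf_den_le_succ n : cf_den (S n) <= cf_den (S (S n)).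
Proof.
  pose proof (Rmult_le_pos _ _ (c_ge0 n) (proj1 (cf_den_pos n))).
  unfold cf_den in *; rewrite cf_rec_SS. lra.
Qed.

Lemma cf_coef_prod_ge0 n : 0 <= cf_coef_prod n.
Proof. induction n; simpl; [lra | now apply Rmult_le_pos]. Qed.

Lemma cf_det n :
  cf_num n * cf_den (S n) - cf_num (S n) * cf_den n = (-1) ^ n * cf_coef_prod n.
Proof.
  induction n as [|n IH]; unfold cf_num, cf_den in *; [simpl; lra|].
  rewrite !cf_rec_SS; cbn [cf_coef_prod pow].
  replace (-1 * (-1) ^ n * (c n * cf_coef_prod n)) with (- c n * ((-1) ^ n * cf_coef_prod n))
    by ring.
  rewrite <- IH. ring.
Qed.

Lemma cf_eval_mobius n x : 0 <= x ->
  cf_eval n x = (cf_num (S n) + x * cf_num n) / (cf_den (S n) + x * cf_den n).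
Proof.
  revert x; induction n as [|n IH]; intros x Hx.
  - unfold cf_num, cf_den; simpl; field.
  - assert (Hstep : 0 <= cf_step n x).
    { unfold cf_step, Rdiv. apply Rmult_le_pos; auto. left; apply Rinv_0_lt_compat; lra. }
    simpl cf_eval; rewrite (IH _ Hstep).
    destruct (cf_den_pos n) as [Q0 Q1].
    pose proof (Rmult_le_pos _ _ (c_ge0 n) Q0).
    unfold cf_num, cf_den, cf_step in *; rewrite !cf_rec_SS.
    field; split; nra.
Qed.

Lemma cf_eval_dist n r : (1 <= n)%nat -> 0 <= r ->
  Rabs (cf_eval n r - cf_eval n 0) <= cf_coef_prod n / (cf_den (S n) * cf_den n).
Proof.
  intros Hn Hr.
  assert (Q0 : 1 <= cf_den n) by (destruct n; [lia | apply cf_den_pos]).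
  pose proof (proj2 (cf_den_pos n)) as Q1.
  pose proof (cf_coef_prod_ge0 n) as P.
  rewrite !cf_eval_mobius by lra.
  replace (_ - _) with (r * (cf_num n * cf_den (S n) - cf_num (S n) * cf_den n)
    / (cf_den (S n) * (cf_den (S n) + r * cf_den n))) by (field; nra).
  rewrite cf_det, Rabs_div, !Rabs_mult, pow_1_abs, Rmult_1_l.
  rewrite (Rabs_right r), (Rabs_right (cf_coef_prod n)), (Rabs_right (cf_den (S n))),
    (Rabs_right (cf_den (S n) + r * cf_den n)) by nra.
  replace (r * cf_coef_prod n / (cf_den (S n) * (cf_den (S n) + r * cf_den n)))
    with (cf_coef_prod n / (cf_den (S n) * cf_den n)
          * (r * cf_den n / (cf_den (S n) + r * cf_den n))) by (field; nra).
  rewrite <- (Rmult_1_r (cf_coef_prod n / _)) at 2. apply Rmult_le_compat_l.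
  - apply Rdiv_le_0_compat; nra.
  - apply Rle_div_l; nra.
  - apply Rgt_not_eq, Rmult_lt_0_compat; nra.
Qed.

Lemma cf_eval_fixed (x : nat -> R) n :
  (forall k, (k < n)%nat -> cf_step k (x (S k)) = x k) -> cf_eval n (x n) = x O.
Proof.
  induction n as [|n IH]; intros Hx; [reflexivity|].
  simpl; rewrite Hx by lia. apply IH; auto.
Qed.

End ContinuedFraction.

Definition partial_num (k : nat) : R := match k with O => 1 | S _ => INR k end.

Lemma partial_num_ge0 k : 0 <= partial_num k.
Proof. destruct k; [simpl; lra | apply pos_INR]. Qed.

Lemma partial_num_coef_prod_le n : (1 <= n)%nat ->
  INR n * cf_coef_prod partial_num n
  <= cf_den partial_num (S n) * cf_den partial_num n.
Proof.
  induction n as [|n IH]; intros Hn; [lia|].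
  destruct n as [|n]; [unfold cf_den; simpl; lra|].
  specialize (IH ltac:(lia)).
  pose proof (cf_den_pos partial_num partial_num_ge0 (S n)) as [_ Q1].
  pose proof (cf_den_le_succ partial_num partial_num_ge0 n) as Qmono.
  unfold cf_den in *. rewrite cf_rec_SS.
  change (cf_coef_prod partial_num (S (S n)))
    with (INR (S n) * cf_coef_prod partial_num (S n)).
  change (partial_num (S n)) with (INR (S n)).
  rewrite S_INR at 1. pose proof (pos_INR (S n)).
  set (a := cf_rec partial_num 0 1 (S n)) in *.
  set (b := cf_rec partial_num 0 1 (S (S n))) in *.
  nra.
Qed.

Lemma partial_num_cf_dist n r : (1 <= n)%nat -> 0 <= r ->
  Rabs (cf_eval partial_num n r - cf_eval partial_num n 0) <= / INR n.
Proof.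
  intros Hn Hr.
  eapply Rle_trans; [apply cf_eval_dist; auto using partial_num_ge0|].
  pose proof (partial_num_coef_prod_le n Hn).
  pose proof (proj2 (cf_den_pos partial_num partial_num_ge0 n)).
  assert (1 <= cf_den partial_num n)
    by (destruct n; [lia | apply (cf_den_pos partial_num partial_num_ge0)]).
  assert (0 < INR n) by (apply lt_0_INR; lia).
  apply Rle_div_l; [nra|].
  apply Rmult_le_reg_l with (INR n); [lra|].
  rewrite <- Rmult_assoc, Rinv_r, Rmult_1_l; lra.
Qed.

Lemma R_cf_eval N : (1 <= N)%nat -> R_cf N = cf_eval partial_num (S N) 0.
Proof.
  intros HN.
  set (x k := match k with O => R_cf N | S _ => cf_tail N (N - k) end).
  assert (Hstep : cf_step partial_num N 0 = x N).
  { unfold x, cf_step. destruct N as [|N']; [lia|].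
    rewrite Nat.sub_diag. simpl. field. }
  simpl cf_eval. rewrite Hstep. symmetry. apply (cf_eval_fixed _ x).
  intros [|k] Hk; unfold x, cf_step.
  - reflexivity.
  - replace (N - S k)%nat with (S (N - S (S k))) by lia. simpl cf_tail.
    replace (N - S (N - S (S k)))%nat with (S k) by lia. reflexivity.
Qed.

Definition kern (k : nat) (t : R) : R := exp (- / (2 * t ^ 2)) / t ^ k.

(* Rocq's [/ 0 = 0] makes this the continuous extension at 0. *)
Lemma kern_at_0 k : (1 <= k)%nat -> kern k 0 = 0.
Proof. intros Hk. unfold kern. rewrite (pow_i k) by lia. apply Rdiv_0_r. Qed.

Lemma kern_succ k t : t <> 0 -> kern (S k) t = kern k t / t.
Proof. intros Ht. unfold kern. pose proof (pow_nonzero t k Ht). simpl pow. field. auto. Qed.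

Lemma kern_pos k t : 0 < t -> 0 < kern k t.
Proof. intros Ht. apply Rdiv_lt_0_compat; [apply exp_pos | apply pow_lt; auto]. Qed.

Lemma exp_ge_pow k s : (1 <= k)%nat -> 0 <= s -> (s / INR k) ^ k <= exp s.
Proof.
  intros Hk Hs. assert (0 < INR k) by (apply lt_0_INR; lia).
  replace (exp s) with (exp (s / INR k) ^ k).
  - apply pow_incr. split; [apply Rdiv_le_0_compat; lra|].
    pose proof (exp_ineq1_le (s / INR k)). lra.
  - rewrite <- Rpower_pow by apply exp_pos. unfold Rpower. rewrite ln_exp.
    f_equal. field. lra.
Qed.

Lemma kern_abs_le k t : (1 <= k)%nat -> Rabs t <= 1 ->
  Rabs (kern k t) <= (2 * INR k) ^ k * Rabs t.
Proof.
  intros Hk Ht. destruct (Req_dec t 0) as [->|Ht0].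
  { rewrite kern_at_0, Rabs_R0 by auto. lra. }
  set (a := Rabs t) in *. assert (Ha : 0 < a) by (apply Rabs_pos_lt; auto).
  assert (0 < INR k) by (apply lt_0_INR; lia).
  unfold kern. rewrite Rabs_div by (apply pow_nonzero; auto).
  rewrite Rabs_right by (left; apply exp_pos).
  rewrite <- RPow_abs, <- pow2_abs, exp_Ropp. fold a.
  assert (Hexp : / (2 * INR k * a) ^ k <= exp (/ (2 * a ^ 2)) * a ^ k).
  { replace (/ (2 * INR k * a) ^ k) with ((/ (2 * a ^ 2) / INR k * a) ^ k)
      by (rewrite <- pow_inv; f_equal; field; lra).
    rewrite Rpow_mult_distr. apply Rmult_le_compat_r; [apply pow_le; lra|].
    apply exp_ge_pow; auto. left; apply Rinv_0_lt_compat; nra. }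
  assert (0 < (2 * INR k * a) ^ k) by (apply pow_lt; nra).
  assert (Hak : a ^ k <= a).
  { destruct k as [|k]; [lia|]. change (a ^ S k) with (a * a ^ k).
    assert (a ^ k <= 1) by (rewrite <- (pow1 k); apply pow_incr; lra). nra. }
  apply Rle_trans with ((2 * INR k * a) ^ k).
  - unfold Rdiv. rewrite <- Rinv_mult, <- (Rinv_inv ((2 * INR k * a) ^ k)).
    apply Rinv_le_contravar; [apply Rinv_0_lt_compat|]; auto.
  - rewrite Rpow_mult_distr. apply Rmult_le_compat_l; auto. apply pow_le; lra.
Qed.

Lemma kern_abs_le_sq k t : (1 <= k)%nat -> Rabs t <= 1 ->
  Rabs (kern k t) <= (2 * INR (S k)) ^ S k * t ^ 2.
Proof.
  intros Hk Ht. destruct (Req_dec t 0) as [->|Ht0].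
  { rewrite kern_at_0, Rabs_R0 by auto. pose proof (pos_INR (S k)).
    simpl; rewrite Rmult_0_l, Rmult_0_r. lra. }
  replace (kern k t) with (t * kern (S k) t) by (rewrite kern_succ by auto; field; auto).
  rewrite Rabs_mult, <- (pow2_abs t).
  pose proof (kern_abs_le (S k) t ltac:(lia) Ht). pose proof (Rabs_pos t). nra.
Qed.

Lemma derivable_pt_lim_0_of_sq_bound (f : R -> R) M : f 0 = 0 ->
  (forall h, Rabs h <= 1 -> Rabs (f h) <= M * h ^ 2) -> derivable_pt_lim f 0 0.
Proof.
  intros H0 Hb eps Heps.
  assert (HM : 0 <= M) by (pose proof (Hb 1 ltac:(rewrite Rabs_R1; lra)); pose proof (Rabs_pos (f 1)); lra).
  assert (Hd : 0 < Rmin 1 (eps / (M + 1))) by (apply Rmin_pos; [lra | apply Rdiv_lt_0_compat; lra]).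
  exists (mkposreal _ Hd). intros h Hh Hx; simpl in Hx.
  rewrite Rplus_0_l, H0, !Rminus_0_r.
  pose proof (Rmin_l 1 (eps / (M + 1))). pose proof (Rmin_r 1 (eps / (M + 1))).
  specialize (Hb h ltac:(lra)). rewrite <- pow2_abs in Hb.
  assert (Ha : 0 < Rabs h) by (apply Rabs_pos_lt; auto).
  rewrite Rabs_div by auto.
  apply Rle_lt_trans with (M * Rabs h).
  - apply Rle_div_l; nra.
  - assert (E : eps = eps / (M + 1) * (M + 1)) by (field; lra).
    assert (0 < eps / (M + 1)) by (apply Rdiv_lt_0_compat; lra).
    rewrite E. nra.
Qed.

Lemma kern_derive k t : (1 <= k)%nat ->
  is_derive (kern k) t (kern (S (S (S k))) t - INR k * kern (S k) t).
Proof.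
  intros Hk. destruct (Req_dec t 0) as [->|Ht].
  - rewrite !kern_at_0, Rmult_0_r, Rminus_0_r by lia.
    apply is_derive_Reals, derivable_pt_lim_0_of_sq_bound with ((2 * INR (S k)) ^ S k).
    + now apply kern_at_0.
    + intros h Hh. now apply kern_abs_le_sq.
  - unfold kern. pose proof (pow_nonzero t k Ht). auto_derive.
    + repeat split; auto. apply Rmult_integral_contrapositive; split; [lra|].
      apply Rmult_integral_contrapositive; split; lra.
    + destruct k as [|k]; [lia|]. pose proof (pow_nonzero t k Ht).
      simpl pow. simpl Nat.pred. field. auto.
Qed.

Lemma kern_continuous k t : (1 <= k)%nat -> continuous (kern k) t.
Proof.
  intros Hk. apply (ex_derive_continuous (K := R_AbsRing) (V := R_NormedModule)).
  eexists. now apply kern_derive.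
Qed.

Definition moment_integrand (n : nat) (t : R) : R := (1 - t) ^ n * kern (S (S n)) t.
Definition moment (n : nat) : R := RInt (moment_integrand n) 0 1.
Definition moment_boundary (n : nat) (t : R) : R := (1 - t) ^ n * t * kern (S n) t.

Lemma one_minus_pow_continuous n t : continuous (fun t => (1 - t) ^ n) t.
Proof.
  apply (ex_derive_continuous (K := R_AbsRing) (V := R_NormedModule)). auto_derive. auto.
Qed.

Lemma one_minus_pow_mul_kern_continuous n k t : (1 <= k)%nat ->
  continuous (fun t => (1 - t) ^ n * kern k t) t.
Proof.
  intros Hk. apply (continuous_mult (fun t => (1 - t) ^ n) (kern k)).
  - apply one_minus_pow_continuous.
  - now apply kern_continuous.
Qed.

Lemma one_minus_pow_mul_kern_ex_RInt n k : (1 <= k)%nat ->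
  ex_RInt (fun t => (1 - t) ^ n * kern k t) 0 1.
Proof.
  intros Hk. apply (ex_RInt_continuous (V := R_CompleteNormedModule)).
  intros; now apply one_minus_pow_mul_kern_continuous.
Qed.

Lemma moment_pos n : 0 < moment n.
Proof.
  apply RInt_gt_0; [lra| |].
  - intros t Ht. apply Rmult_lt_0_compat; [apply pow_lt | apply kern_pos]; lra.
  - intros t _. apply one_minus_pow_mul_kern_continuous; lia.
Qed.

Lemma moment_boundary_derive n t :
  is_derive (moment_boundary n) t
    (moment_integrand (S n) t + moment_integrand n t
     - INR n * ((1 - t) ^ pred n * kern (S n) t)).
Proof.
  assert (Dpow : is_derive (fun t => (1 - t) ^ n) t (INR n * (-1) * (1 - t) ^ pred n)).
  { apply (is_derive_pow (fun t => 1 - t)). auto_derive. auto. ring. }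
  assert (Did : is_derive (fun t : R => t) t 1) by (auto_derive; auto).
  pose proof (is_derive_mult _ _ _ _ _
    (is_derive_mult _ _ _ _ _ Dpow Did Rmult_comm) (kern_derive (S n) t ltac:(lia)) Rmult_comm)
    as Dg.
  match type of Dg with is_derive _ _ ?v => replace (_ - _) with v; [exact Dg|] end.
  unfold moment_integrand, mult, plus. cbn -[kern pow INR].
  destruct (Req_dec t 0) as [->|Ht].
  - rewrite !kern_at_0 by lia. ring.
  - rewrite !kern_succ by auto.
    destruct n as [|m]; cbn -[kern INR]; rewrite ?S_INR, ?INR_0; field; auto.
Qed.

Lemma moment_ftc n :
  moment (S n) + moment n - INR n * RInt (fun t => (1 - t) ^ pred n * kern (S n) t) 0 1
  = moment_boundary n 1 - moment_boundary n 0.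
Proof.
  set (F t := moment_integrand (S n) t + moment_integrand n t
              - INR n * ((1 - t) ^ pred n * kern (S n) t)).
  assert (Hlin : is_RInt F 0 1 (moment (S n) + moment n
    - INR n * RInt (fun t => (1 - t) ^ pred n * kern (S n) t) 0 1)).
  { apply (is_RInt_minus (V := R_NormedModule)
      (fun t => moment_integrand (S n) t + moment_integrand n t)).
    - apply (is_RInt_plus (V := R_NormedModule));
        apply (RInt_correct (V := R_CompleteNormedModule)), one_minus_pow_mul_kern_ex_RInt; lia.
    - apply (is_RInt_scal (V := R_NormedModule)), (RInt_correct (V := R_CompleteNormedModule)).
      apply one_minus_pow_mul_kern_ex_RInt; lia. }
  assert (Hftc : is_RInt F 0 1 (moment_boundary n 1 - moment_boundary n 0)).
  { apply (is_RInt_derive (V := R_CompleteNormedModule) (moment_boundary n) F).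
    - intros t _. apply moment_boundary_derive.
    - intros t _. unfold F.
      apply (continuous_minus (fun t => moment_integrand (S n) t + moment_integrand n t)).
      + apply (continuous_plus (moment_integrand (S n)) (moment_integrand n));
          apply one_minus_pow_mul_kern_continuous; lia.
      + apply (continuous_scal_r (INR n) (fun t => (1 - t) ^ pred n * kern (S n) t)).
        apply one_minus_pow_mul_kern_continuous; lia. }
  rewrite <- (is_RInt_unique _ _ _ _ Hlin). exact (is_RInt_unique _ _ _ _ Hftc).
Qed.

Lemma moment_rec0 : moment 1 + moment 0 = exp (- / 2).
Proof.
  pose proof (moment_ftc 0) as H. unfold moment_boundary in H.
  rewrite kern_at_0 in H by lia. unfold kern in H. cbn [pow] in H.
  rewrite INR_0, !Rmult_1_r, Rdiv_1_r in H. lra.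
Qed.

Lemma moment_rec n : moment (S (S n)) + moment (S n) = INR (S n) * moment n.
Proof.
  pose proof (moment_ftc (S n)) as H. unfold moment_boundary in H.
  rewrite kern_at_0 in H by lia.
  replace (1 - 1) with 0 in H by ring. rewrite pow_i, !Rmult_0_l, !Rmult_0_r in H by lia.
  cbn [Nat.pred] in H. fold (moment_integrand n) in H. fold (moment n) in H. lra.
Qed.

Lemma moment_ratio_cf n :
  cf_eval partial_num (S n) (moment (S n) / moment n) = exp (1 / 2) * moment 0.
Proof.
  set (x k := match k with O => exp (1 / 2) * moment 0 | S j => moment k / moment j end).
  apply (cf_eval_fixed _ x). intros k _. unfold x, cf_step.
  destruct k as [|k].
  - assert (Hrec : moment 1 + moment 0 = / exp (1 / 2))
      by (rewrite moment_rec0, <- exp_Ropp; f_equal; field).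
    pose proof (moment_pos 0). pose proof (exp_pos (1 / 2)).
    replace (1 + moment 1 / moment 0) with (/ exp (1 / 2) / moment 0)
      by (rewrite <- Hrec; field; lra).
    simpl partial_num. field. lra.
  - pose proof (moment_pos k). pose proof (moment_pos (S k)). pose proof (moment_pos (S (S k))).
    assert (0 < INR (S k)) by (apply lt_0_INR; lia).
    replace (1 + moment (S (S k)) / moment (S k))
      with (INR (S k) * moment k / moment (S k)) by (rewrite <- moment_rec; field; lra).
    change (partial_num (S k)) with (INR (S k)). field. split; lra.
Qed.

Lemma Un_cv_of_dist_le_inv (u : nat -> R) l :
  (forall n, R_dist (u n) l <= / INR (S n)) -> Un_cv u l.
Proof.
  intros Hu eps Heps. destruct (INR_unbounded (/ eps)) as [N HN].
  exists N. intros n Hn. eapply Rle_lt_trans; [apply Hu|].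
  assert (INR N <= INR n) by (apply le_INR; lia).
  rewrite S_INR, <- (Rinv_inv eps).
  pose proof (Rinv_0_lt_compat _ Heps).
  apply Rinv_lt_contravar; [apply Rmult_lt_0_compat|]; lra.
Qed.

Theorem mainTheorem5 :
  exists pr : Riemann_integrable integrand 0 1,
    Un_cv (fun n : nat => R_cf (S n)) (exp (1 / 2) * RiemannInt pr).
Proof.
  assert (Hint : ex_RInt integrand 0 1).
  { apply (ex_RInt_continuous (V := R_CompleteNormedModule)).
    intros t _. apply (kern_continuous 2); lia. }
  exists (ex_RInt_Reals_0 _ _ _ Hint). rewrite <- RInt_Reals.
  replace (RInt integrand 0 1) with (moment 0)
    by (apply RInt_ext; intros t _; apply Rmult_1_l).
  apply Un_cv_of_dist_le_inv. intros n.
  rewrite R_cf_eval, <- (moment_ratio_cf (S n)), R_dist_sym by lia.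
  eapply Rle_trans.
  - apply partial_num_cf_dist; [lia|].
    apply Rlt_le, Rdiv_lt_0_compat; apply moment_pos.
  - apply Rinv_le_contravar; [apply lt_0_INR; lia | apply le_INR; lia].
Qed.
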